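(* Let $G$ be a finite group, $P$ a $p$-subgroup and $Q$ a $q$-subgroup of $G$ for two different primes $p$ and $q$, and assume $\Pr(P,Q)\ge\epsilon>0$. (1) If $P$ normalizes $Q$ and $p>(2/\epsilon)^{6/\epsilon}$, then $[P,Q]=1$. (2) If $p>(2/\epsilon)^{6/\epsilon}$, then $Q$ has a normal subgroup $Q_0$ such that $|Q:Q_0|\le\lfloor 2/\epsilon\rfloor!$ and $[P,Q_0]=1$.
   Context: For subsets $X,Y$ of a finite group, $\Pr(X,Y)=|\{(x,y)\in X\times Y: xy=yx\}|/(|X||Y|)$. *)

From HB Require Import structures.
From mathcomp Require Import all_boot all_order all_algebra all_fingroup all_solvable.
From mathcomp Require Import reals exp.
Set Implicit Arguments. Unset Strict Implicit. Unset Printing Implicit Defensive.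
Import Order.TTheory GRing.Theory Num.Theory.
Local Open Scope ring_scope.

Definition comm_prob (R : realType) (gT : finGroupType) (X Y : {set gT}) : R :=
  (#|[set xy in setX X Y | (xy.1 * xy.2 == xy.2 * xy.1)%g]|%:R) / ((#|X| * #|Y|)%N%:R).

From HB Require Import structures.
From mathcomp Require Import all_boot all_order all_algebra all_fingroup all_solvable.
From mathcomp Require Import reals exp.
From mathcomp Require Import ring lra.
Set Implicit Arguments. Unset Strict Implicit. Unset Printing Implicit Defensive.
Import Order.TTheory GRing.Theory Num.Theory.

(* Counting commuting pairs by their second coordinate: an element y of Q
   outside C_Q(P) has |C_P(y)| <= |P|/p, so Pr(P,Q) <= 1/|Q : C_Q(P)| + 1/p,
   and p > 2/eps forces |Q : C_Q(P)| < 2/eps < p.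
   If P normalizes Q, the fixed points of P acting on Q by conjugation form
   C_Q(P), so |Q| = |C_Q(P)| mod p; as |C_Q(P)| is prime to p, the index
   |Q : C_Q(P)| is 1 mod p, hence equal to 1.
   In general, the core of C_Q(P) in Q is the kernel of the action of Q on the
   cosets of C_Q(P), so its index is at most |Q : C_Q(P)|!. *)

Lemma pnat_leq (p m : nat) : p.-nat m -> (1 < m)%N -> (p <= m)%N.
Proof.
move=> pm m_gt1; have /eqnP <- := pnatPpi pm (etrans (pi_pdiv m) m_gt1).
by rewrite pdiv_leq // ltnW.
Qed.

Section CommutingPairs.
Local Open Scope group_scope.
Variable gT : finGroupType.
Implicit Types (P Q : {group gT}) (y : gT).

Definition commuting_pairs (X Y : {set gT}) :=
  [set xy in setX X Y | xy.1 * xy.2 == xy.2 * xy.1].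

Lemma card_commuting_pairs P Q :
  #|commuting_pairs P Q| = (\sum_(y in Q) #|'C_P[y]|)%N.
Proof.
transitivity (\sum_(y in Q) \sum_(x in P) ((x * y == y * x)%g : nat))%N.
  rewrite exchange_big pair_big /= -sum1_card big_mkcond [RHS]big_mkcond /=.
  by apply: eq_bigr => -[x y] _; rewrite !inE /=; case: (x \in P); case: (y \in Q).
apply: eq_bigr => y _; rewrite -sum1_card big_mkcond [RHS]big_mkcond /=.
by apply: eq_bigr => x _; rewrite inE cent1E; case: (x \in P).
Qed.

Lemma pgroup_card_cent1_leq (p : nat) P y :
  p.-group P -> y \notin 'C(P) -> (p * #|'C_P[y]| <= #|P|)%N.
Proof.
move=> pP yP'; rewrite -(Lagrange (subsetIl P 'C[y])) mulnC leq_pmul2l //.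
apply: pnat_leq; first exact: pnat_dvd (dvdn_indexg _ _) pP.
by rewrite indexg_gt1 subsetI subxx /= sub_cent1.
Qed.

Lemma pgroup_card_commuting_pairs_leq (p : nat) P Q : p.-group P ->
  (p * #|commuting_pairs P Q| <= p * #|P| * #|'C_Q(P)| + #|P| * #|Q|)%N.
Proof.
move=> pP; rewrite card_commuting_pairs big_distrr (bigID (mem 'C(P))) /=.
apply: leq_add.
  rewrite (eq_bigr (fun _ => p * #|P|)%N) => [|y /andP[_ cPy]]; last first.
    by rewrite (setIidPl _) // sub_cent1.
  rewrite sum_nat_const mulnC leq_mul2l; apply/orP; right.
  by apply/subset_leq_card/subsetP => y; rewrite inE.
apply: leq_trans (_ : \sum_(y in Q) #|P| <= _)%N; last by rewrite sum_nat_const mulnC.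
rewrite [X in (_ <= X)%N](bigID (mem 'C(P))) /=; apply: leq_trans (leq_addl _ _).
by apply: leq_sum => y /andP[_]; apply: pgroup_card_cent1_leq.
Qed.
End CommutingPairs.

Section CentralizerIndex.
Local Open Scope group_scope.
Variable gT : finGroupType.
Implicit Types (P Q G H : {group gT}).

Lemma card_cent_mod (p : nat) P Q : p.-group P -> P \subset 'N(Q) ->
  #|Q| = #|'C_Q(P)| %[mod p].
Proof. by move=> pP nQP; rewrite -afixJ (pgroup_fix_mod (to := 'J) pP) // astabsJ. Qed.

Lemma commG1_of_index_cent_lt (p : nat) P Q :
  p.-group P -> coprime #|Q| p -> P \subset 'N(Q) ->
  (#|Q : 'C_Q(P)| < p)%N -> [~: P, Q] = 1.
Proof.
move=> pP coQp nQP lt_n_p; set C := 'C_Q(P).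
have sCQ : C \subset Q := subsetIl Q _.
have coCp : coprime p #|C| by rewrite coprime_sym (coprime_dvdl (cardSg sCQ)).
have n_gt0 : (0 < #|Q : C|)%N := indexg_gt0 Q C.
have : (#|C| * #|Q : C| == #|C| * 1 %[mod p])%N.
  by rewrite muln1 Lagrange // -card_cent_mod.
rewrite eqn_mod_dvd ?leq_mul2l ?n_gt0 ?orbT // -mulnBr Gauss_dvdr // => p_dvd.
have sQC : Q \subset C.
  rewrite -indexg_eq1 eqn_leq n_gt0 andbT -subn_eq0; move: p_dvd; apply: contraLR.
  by rewrite -lt0n => n1_gt0; rewrite gtnNdvd // (leq_ltn_trans (leq_subr 1 _)).
by apply/commG1P; rewrite centsC (subset_trans sQC) ?subsetIr.
Qed.

Lemma index_gcore_leq_fact G H : H \subset G -> (#|G : gcore H G| <= #|G : H|`!)%N.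
Proof.
move=> sHG; pose nRA := actsRs_rcosets H G; pose f := actperm <[nRA]>.
have kerf : 'ker f = gcore H G.
  rewrite ker_actperm astab_actby setIT astabRs_rcosets.
  by apply/setIidPr; apply: subset_trans (gcore_sub H G) sHG.
rewrite -kerf -{1}(setIid G) -card_morphim -card_perm subset_leq_card //.
apply/subsetP => _ /morphimP[a _ Ga ->]; apply/subsetP => X; rewrite inE /=.
by rewrite actpermE /= /actby; case: (X \in rcosets H G); rewrite ?eqxx.
Qed.
End CentralizerIndex.

Local Open Scope ring_scope.

Lemma lt_2div_of_le_invD (R : realFieldType) (eps n p : R) :
  0 < eps -> 0 < n -> 0 < p -> eps <= n^-1 + p^-1 -> 2 / eps < p -> n < 2 / eps.
Proof.
move=> eps_gt0 n_gt0 p_gt0 eps_le p_gt.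
have p_inv_lt : p^-1 < eps / 2 by rewrite -invf_div ltf_pV2 ?posrE ?divr_gt0.
by rewrite -ltf_pV2 ?posrE ?divr_gt0 // invf_div; lra.
Qed.

Section CommutingProbability.
Variables (R : realType) (gT : finGroupType).

Lemma comm_prob_le_index_cent (p : nat) (P Q : {group gT}) :
  (0 < p)%N -> (p.-group P)%g ->
  comm_prob R P Q <= #|Q : 'C_Q(P)|%g%:R^-1 + p%:R^-1.
Proof.
move=> p_gt0 pP; have sCQ : ('C_Q(P) \subset Q)%g := subsetIl Q _.
have := pgroup_card_commuting_pairs_leq Q pP.
rewrite /comm_prob -/(commuting_pairs P Q) -(Lagrange sCQ).
set e := #|commuting_pairs P Q|; set a := #|P|; set c := #|'C_Q(P)%G|.
set n := #|Q : 'C_Q(P)%G|%g.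
have [a0 c0 n0 p0] : [/\ 0 < a%:R :> R, 0 < c%:R :> R, 0 < n%:R :> R & 0 < p%:R :> R].
  by rewrite !ltr0n p_gt0 !cardG_gt0 indexg_gt0.
rewrite -(ler_nat R) !natrM natrD !natrM => count_le.
rewrite ler_pdivrMr ?mulr_gt0 //.
have -> : (n%:R^-1 + p%:R^-1) * (a%:R * (c%:R * n%:R)) =
          (p%:R * a%:R * c%:R + a%:R * (c%:R * n%:R)) / p%:R :> R.
  by field; rewrite !lt0r_neq0.
by rewrite ler_pdivlMr // mulrC.
Qed.

Lemma comm_prob_le1 (P Q : {group gT}) : comm_prob R P Q <= 1.
Proof.
rewrite /comm_prob ler_pdivrMr ?ltr0n ?muln_gt0 ?cardG_gt0 // mul1r ler_nat.
by rewrite -cardsX setIdE subset_leq_card ?subsetIl.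
Qed.

Lemma index_cent_lt_of_comm_prob (p : nat) (P Q : {group gT}) (eps : R) :
  (0 < p)%N -> (p.-group P)%g -> 0 < eps -> eps <= comm_prob R P Q ->
  2 / eps < p%:R -> #|Q : 'C_Q(P)|%g%:R < 2 / eps.
Proof.
move=> p_gt0 pP eps_gt0 eps_le; apply: lt_2div_of_le_invD; rewrite ?ltr0n //.
exact: le_trans eps_le (comm_prob_le_index_cent Q p_gt0 pP).
Qed.
End CommutingProbability.

Theorem lemma2p10 (R : realType) (gT : finGroupType) (P Q : {group gT})
  (p q : nat) (eps : R) :
  prime p -> prime q -> p != q ->
  (p.-group P)%g -> (q.-group Q)%g ->
  0 < eps -> eps <= comm_prob R P Q ->
  ((P \subset 'N(Q))%g -> powR (2 / eps) (6 / eps) < p%:R ->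
     [~: P, Q]%g = 1%g)
  /\
  (powR (2 / eps) (6 / eps) < p%:R ->
     exists Q0 : {group gT},
       [/\ (Q0 <| Q)%g, (#|Q : Q0|%g <= (Num.truncn (2 / eps))`!)%N
         & [~: P, Q0]%g = 1%g]).
Proof.
move=> p_pr _ neq_pq pP qQ eps_gt0 eps_le.
have eps_le1 := le_trans eps_le (comm_prob_le1 R P Q).
have lt_2div_p : powR (2 / eps) (6 / eps) < p%:R -> 2 / eps < p%:R.
  by apply: le_lt_trans; apply: le1r_powR; rewrite ler_pdivlMr // mul1r; lra.
have lt_index := index_cent_lt_of_comm_prob (prime_gt0 p_pr) pP eps_gt0 eps_le.
have sCQ : ('C_Q(P) \subset Q)%g := subsetIl Q _.
split=> [nQP /lt_2div_p p_gt | /lt_2div_p /lt_index n_lt].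
  apply: commG1_of_index_cent_lt pP _ nQP _.
    by apply: pnat_coprime qQ _; rewrite pnatE // !inE.
  by rewrite -(ltr_nat R); apply: lt_trans (lt_index p_gt) p_gt.
exists (gcore 'C_Q(P) Q)%G; split.
- exact: gcore_normal.
- apply: leq_trans (index_gcore_leq_fact sCQ) (leq_fact _).
  by rewrite truncn_ge_nat ?ltW // divr_gt0.
- by apply/commG1P; rewrite centsC (subset_trans (gcore_sub _ _)) ?subsetIr.
Qed.
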